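(* Let $Z_1,\dots,Z_n$ be independent real-valued sub-Gaussian random variables with parameter $\sigma^2$, let $\alpha\in(0,1]$, and fix $p_0\in(0,\frac12]$. Then there is an event $\mathcal{E}^{\mathrm{ord}}_{p_0}$ with $\mathbb{P}[\mathcal{E}^{\mathrm{ord}}_{p_0}]\ge 1-2e^{-0.3n}$ on which, for all $p\in[p_0,\frac12]$ and all sub-collections $V\subseteq\{Z_1,\dots,Z_n\}$ with $|V|\ge\max\{n\alpha,\,2/p_0\}$, $$-\sigma\sqrt{\tfrac{4}{p_0}\big(\tfrac1\alpha+1\big)}\ \le\ V^{(\lceil(1-p)|V|\rceil)}\ \le\ V^{(\lfloor p|V|\rfloor)}\ \le\ \sigma\sqrt{\tfrac{4}{p_0}\big(\tfrac1\alpha+1\big)}.$$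
   Context: A real random variable $Z$ is sub-Gaussian with parameter $\sigma^2$ if $\mathbb{E}[e^{\lambda Z}]\le e^{\lambda^2\sigma^2/2}$ for all $\lambda\in\mathbb{R}$. For a finite multiset of reals $\{v_1,\dots,v_m\}$, its order statistics are $v^{(1)}\ge v^{(2)}\ge\dots\ge v^{(m)}$ (so $v^{(t)}$ is the $t$-th largest). Sub-collections $V$ are indexed by subsets of $[n]$. *)

From HB Require Import structures.
From mathcomp Require Import all_boot all_order all_algebra.
From mathcomp Require Import all_classical all_reals all_analysis.
Set Implicit Arguments. Unset Strict Implicit. Unset Printing Implicit Defensive.
Import Order.TTheory GRing.Theory Num.Theory.
Local Open Scope ring_scope.
Local Open Scope classical_set_scope.

Definition mutually_independent {d} {T : measurableType d} {R : realType}
  (P : probability T R) {n : nat} (Z : 'I_n -> {RV P >-> R}) : Prop :=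
  forall (J : {set 'I_n}) (B : 'I_n -> set R),
    (forall j, measurable (B j)) ->
    P (\bigcap_(j in [set j | j \in J]) (Z j @^-1` B j)) =
    (\prod_(j in J) P (Z j @^-1` B j))%E.

Definition subgaussian {d} {T : measurableType d} {R : realType}
  (P : probability T R) (X : T -> R) (s2 : R) : Prop :=
  forall lam : R,
    (\int[P]_w (expR (lam * X w))%:E <= (expR (lam ^+ 2 * s2 / 2))%:E)%E.

(* t-th largest element (1-indexed) of a finite multiset of reals. *)
Definition ordstat {R : realType} (s : seq R) (t : nat) : R :=
  nth 0 (sort (fun x y => y <= x) s) t.-1.

(* floor and ceil as natural numbers (used only on nonnegative arguments) *)
Definition natfloor {R : realType} (x : R) : nat := `|Num.floor x|%N.
Definition natceil {R : realType} (x : R) : nat := `|Num.ceil x|%N.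

From HB Require Import structures.
From mathcomp Require Import all_boot all_order all_algebra.
From mathcomp Require Import all_classical all_reals all_analysis.
From mathcomp Require Import ring lra.
Set Implicit Arguments. Unset Strict Implicit. Unset Printing Implicit Defensive.
Import Order.TTheory GRing.Theory Num.Theory.
Local Open Scope ring_scope.
Local Open Scope classical_set_scope.

(* A sub-Gaussian variable with parameter s^2 exceeds s * sqrt c with probability
   at most exp(-c/2). By independence, a fixed set of K indices all exceed
   B = sigma * sqrt c with probability at most exp(-cK/2), and a union bound over
   the 2^n subsets of indices shows that at least K of the Z_i exceed B with
   probability at most 2^n exp(-cK/2); for c = 4/p0 (1/alpha + 1) and
   K = ceil(2/3 p0 alpha n) this is at most exp(-0.3 n). The same holds below -B.
   Off these two events, a sub-collection V with |V| >= max(n alpha, 2/p0) has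
   fewer than K <= floor(p|V|) elements above B and fewer than
   K <= |V| - ceil((1-p)|V|) + 1 elements below -B, which pins both order
   statistics between -B and B. *)

Section order_statistics.
Variable R : realType.
Implicit Types (s : seq R) (b : R).

Let ge : rel R := fun x y => y <= x.

Let nth_sort_ge s i j : (i <= j < size s)%N ->
  nth 0 (sort ge s) j <= nth 0 (sort ge s) i.
Proof.
move=> /andP[ij js].
have ge_trans : transitive ge by move=> x y z /= yx zy; exact: le_trans zy yx.
have ge_total : total ge by move=> x y; rewrite /ge orbC le_total.
apply: (sorted_leq_nth ge_trans lexx 0 (sort_sorted ge_total s)) => //;
  by rewrite inE size_sort ?(leq_ltn_trans ij js).
Qed.

Lemma ordstat_antimono s t1 t2 : (0 < t1 <= t2)%N -> (t2 <= size s)%N ->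
  ordstat s t2 <= ordstat s t1.
Proof.
move=> /andP[t1_gt0 t12] t2s; apply: nth_sort_ge.
by rewrite -!subn1 leq_sub2r //= subn1 prednK ?(leq_trans t1_gt0 t12).
Qed.

Lemma ordstat_le_of_count s t b : (0 < t <= size s)%N ->
  (count (fun x => (b < x)%R) s < t)%N -> ordstat s t <= b.
Proof.
move=> /andP[t_gt0 ts]; rewrite leNgt; apply: contraTN => b_lt.
rewrite -leqNgt -(permP (permEl (perm_sort ge s))) -(cat_take_drop t (sort ge s)).
rewrite count_cat; apply: leq_trans (leq_addr _ _).
have size_take_t : size (take t (sort ge s)) = t by rewrite size_takel ?size_sort.
suff : all (fun x => (b < x)%R) (take t (sort ge s)).
  by rewrite all_count size_take_t => /eqP ->.
apply/(all_nthP 0) => i; rewrite size_take_t => it.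
rewrite nth_take //; apply: lt_le_trans b_lt _; apply: nth_sort_ge.
by rewrite -ltnS prednK // it.
Qed.

Lemma ordstat_ge_of_count s t b : (0 < t <= size s)%N ->
  (count (fun x => (x < b)%R) s <= size s - t)%N -> b <= ordstat s t.
Proof.
move=> /andP[t_gt0 ts]; rewrite leNgt; apply: contraTN => lt_b.
rewrite -ltnNge -(permP (permEl (perm_sort ge s))) -(cat_take_drop t.-1 (sort ge s)).
rewrite count_cat; apply: leq_trans (leq_addl _ _).
have size_drop_t : size (drop t.-1 (sort ge s)) = (size s - t).+1.
  by rewrite size_drop size_sort -subnSK prednK.
suff : all (fun x => (x < b)%R) (drop t.-1 (sort ge s)).
  by rewrite all_count size_drop_t => /eqP ->.
apply/(all_nthP 0) => i; rewrite size_drop_t => it.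
rewrite nth_drop; apply: le_lt_trans _ lt_b; apply: nth_sort_ge.
by rewrite leq_addr /= -ltn_subRL -subnSK prednK.
Qed.

End order_statistics.

Section quantile_indices.
Variable R : realType.

Lemma natfloor_itv (x : R) : 0 <= x ->
  (natfloor x)%:R <= x < (natfloor x)%:R + 1.
Proof.
move=> x_ge0; rewrite /natfloor natr_absz ger0_norm ?floor_ge0 //.
by have /andP[-> ] := floor_itv x; rewrite intrD.
Qed.

Lemma natceil_itv (x : R) : 0 <= x ->
  x <= (natceil x)%:R < x + 1.
Proof.
move=> x_ge0; rewrite /natceil natr_absz ger0_norm ?ceil_ge0 ?(lt_le_trans (ltrN10 R)) //.
by have /andP[+ ->] := ceil_itv x; rewrite intrB ltrBlDr => ->.
Qed.

Lemma natceil_le (x : R) k : 0 <= x -> x <= k%:R -> (natceil x <= k)%N.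
Proof.
move=> x_ge0 xk; have /andP[_ lt_x1] := natceil_itv x_ge0.
by rewrite -ltnS -(ltr_nat R) -addn1 natrD (lt_le_trans lt_x1) // lerD2r.
Qed.

Lemma quantile_indices (m : nat) (p a : R) :
  0 < p <= 2^-1 -> 2 <= p * m%:R -> 0 <= a <= p * m%:R ->
  [/\ (0 < natfloor (p * m%:R) <= natceil ((1 - p) * m%:R))%N,
      (natceil ((1 - p) * m%:R) <= m)%N,
      (natceil (2 / 3 * a) <= natfloor (p * m%:R))%N &
      (natceil (2 / 3 * a) <= (m - natceil ((1 - p) * m%:R)).+1)%N].
Proof.
move=> /andP[p_gt0 p_le] pm_ge2 /andP[a_ge0 a_le].
have m_ge0 : 0 <= m%:R :> R by [].
have pm_ge0 : 0 <= p * m%:R by apply: le_trans pm_ge2.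
have qm_ge0 : 0 <= (1 - p) * m%:R by nra.
have /andP[hi_le hi_gt] := natfloor_itv pm_ge0.
have /andP[lo_ge lo_lt] := natceil_itv qm_ge0.
set hi := natfloor _ in hi_le hi_gt *; set lo := natceil _ in lo_ge lo_lt *.
have lo_le_m : (lo <= m)%N by apply: natceil_le => //; nra.
have hi_ge2 : (1 < hi)%N by rewrite -(ltr_nat R); lra.
have hi_ge2R : 2 <= hi%:R :> R by rewrite (ler_nat R 2).
split => //.
- by rewrite (leq_trans _ hi_ge2) //= -(ler_nat R); nra.
- by apply: natceil_le; [rewrite mulr_ge0 | lra].
apply: natceil_le; first by rewrite mulr_ge0.
by rewrite -[X in _ <= X]natr1 natrB //; lra.
Qed.

Lemma ordstat_quantile_bounds (s : seq R) (p a b : R) :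
  0 < p <= 2^-1 -> 2 <= p * (size s)%:R -> 0 <= a <= p * (size s)%:R ->
  (count (fun x => (b < x)%R) s < natceil (2 / 3 * a))%N ->
  (count (fun x => (x < - b)%R) s < natceil (2 / 3 * a))%N ->
  let lo := natceil ((1 - p) * (size s)%:R) in
  let hi := natfloor (p * (size s)%:R) in
  [/\ - b <= ordstat s lo, ordstat s lo <= ordstat s hi & ordstat s hi <= b].
Proof.
move=> p_itv pm_ge2 a_itv count_gt count_lt lo hi.
have [/andP[hi_gt0 hi_le_lo] lo_le K_le_hi K_le_lo] := quantile_indices p_itv pm_ge2 a_itv.
have lo_gt0 : (0 < lo)%N := leq_trans hi_gt0 hi_le_lo.
split.
- apply: ordstat_ge_of_count; first by rewrite lo_gt0.
  by rewrite -ltnS (leq_trans count_lt).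
- by apply: ordstat_antimono; rewrite ?hi_gt0.
- apply: ordstat_le_of_count; first by rewrite hi_gt0 (leq_trans hi_le_lo).
  exact: leq_trans count_gt K_le_hi.
Qed.

End quantile_indices.

Lemma count_map_enum (T : finType) (U : Type) (V : {set T}) (f : T -> U) (a : pred U) :
  count a [seq f i | i <- enum V] = #|[set i in V | a (f i)]|.
Proof.
rewrite count_map -size_filter cardE /enum_mem -filter_predI.
by congr size; apply: eq_filter => i; rewrite !inE andbC.
Qed.

Lemma measure_preimage_gt0_le d (T : measurableType d) (R : realType)
    (mu : {measure set T -> \bar R}) (X : {mfun T >-> R}) (q : \bar R) :
  (forall t, 0 < t -> (mu (X @^-1` `]t%R, +oo[) <= q)%E) ->
  (mu (X @^-1` `]0%R, +oo[) <= q)%E.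
Proof.
move=> le_q.
pose F k := X @^-1` `](k.+1%:R^-1 : R), +oo[.
have F_meas k : measurable (F k) := measurable_funPTI _ (measurable_itv _).
have F_nd : nondecreasing_seq F.
  move=> i j ij; apply/subsetPset => x; rewrite /F /= !in_itv /= !andbT.
  by apply: le_lt_trans; rewrite lef_pV2 ?posrE // ler_nat.
have F_cup : \bigcup_k F k = X @^-1` `]0%R, +oo[.
  apply/seteqP; split => x /=.
    by case=> k _; rewrite /F /= !in_itv /= !andbT; apply: lt_trans.
  rewrite in_itv /= andbT => X_gt0; exists (Num.truncn (X x)^-1) => //.
  by rewrite /F /= in_itv /= andbT invf_plt ?posrE // truncnS_gt.
have F_cvg := nondecreasing_cvg_mu (mu := mu) F_meas (bigcup_measurable (fun k _ => F_meas k)) F_nd.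
rewrite -F_cup -(cvg_lim _ F_cvg) //; apply: lime_le; first by apply/cvg_ex; exists (mu (\bigcup_k F k)).
by apply: nearW => k; apply: le_q.
Qed.

Section subgaussian_tail.
Context d (T : measurableType d) (R : realType) (P : probability T R).
Implicit Types X : {RV P >-> R}.

Lemma subgaussian_le (X : T -> R) (s2 s2' : R) :
  s2 <= s2' -> subgaussian P X s2 -> subgaussian P X s2'.
Proof.
move=> le_s2 subgX lam; apply: le_trans (subgX lam) _.
by rewrite lee_fin ler_expR ler_wpM2r ?invr_ge0 // ler_wpM2l ?sqr_ge0.
Qed.

Lemma subgaussian_opp X (s2 : R) :
  subgaussian P X s2 -> subgaussian P (measurable_realfun.scale_mfun (-1) X) s2.
Proof.
move=> subgX lam; rewrite -sqrrN; apply: le_trans (subgX (- lam)).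
by under eq_integral do rewrite /= mulrN1 mulrN -mulNr.
Qed.

Lemma subgaussian_chernoff X (s2 r a : R) : 0 < r -> subgaussian P X s2 ->
  (P [set x | (a <= X x)%R] <= (expR (r ^+ 2 * s2 / 2 - r * a))%:E)%E.
Proof.
move=> r_gt0 subgX; apply: le_trans (chernoff _ _ r_gt0) _.
rewrite expRD EFinM lee_wpmul2r ?lee_fin ?expR_ge0 //.
rewrite /mmt_gen_fun unlock; under eq_integral do rewrite /= mulrC.
exact: subgX.
Qed.

Lemma subgaussian_tail_pos X (s c : R) : 0 < s -> 0 < c ->
  subgaussian P X (s ^+ 2) ->
  (P (X @^-1` `](s * Num.sqrt c)%R, +oo[) <= (expR (- (c / 2)))%:E)%E.
Proof.
move=> s_gt0 c_gt0 subgX; set B := s * Num.sqrt c.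
have r_gt0 : 0 < Num.sqrt c / s by rewrite divr_gt0 // sqrtr_gt0.
apply: (@le_trans _ _ (P [set x | (B <= X x)%R])).
  apply: le_measure; rewrite ?inE.
  - exact: measurable_funPTI (measurable_itv _).
  - rewrite (_ : [set x | _] = X @^-1` `[B, +oo[).
      exact: measurable_funPTI (measurable_itv _).
    by apply/seteqP; split => x /=; rewrite in_itv /= andbT.
  - by move=> x /=; rewrite in_itv /= andbT => /ltW.
apply: le_trans (subgaussian_chernoff B r_gt0 subgX) _.
have sqrt_c2 : Num.sqrt c ^+ 2 = c by rewrite sqr_sqrtr // ltW.
rewrite lee_fin ler_expR (_ : _ - _ = - (c / 2)) // /B -[in RHS]sqrt_c2.
by field; rewrite lt0r_neq0.
Qed.


Lemma subgaussian_tail X (s c : R) : 0 <= s -> 0 < c ->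
  subgaussian P X (s ^+ 2) ->
  (P (X @^-1` `](s * Num.sqrt c)%R, +oo[) <= (expR (- (c / 2)))%:E)%E.
Proof.
move=> s_ge0 c_gt0 subgX; have sqrt_c_gt0 : 0 < Num.sqrt c by rewrite sqrtr_gt0.
move: s_ge0; rewrite le_eqVlt => /predU1P[s0|s_gt0]; last exact: subgaussian_tail_pos.
(* With s = 0, X is sub-Gaussian with every parameter, so each level t > 0
   is exceeded with probability at most exp(-c/2). *)
rewrite -s0 mul0r; apply: measure_preimage_gt0_le => t t_gt0.
have t_sqrt_c_gt0 : 0 < t / Num.sqrt c by rewrite divr_gt0.
rewrite -(divfK (lt0r_neq0 sqrt_c_gt0) t).
apply: subgaussian_tail_pos => //; apply: subgaussian_le subgX.
by rewrite -s0 expr0n sqr_ge0.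
Qed.

Lemma subgaussian_tail_opp X (s c : R) : 0 <= s -> 0 < c ->
  subgaussian P X (s ^+ 2) ->
  (P (X @^-1` `]-oo, (- (s * Num.sqrt c))%R[) <= (expR (- (c / 2)))%:E)%E.
Proof.
move=> s_ge0 c_gt0 /subgaussian_opp/(subgaussian_tail s_ge0 c_gt0).
suff -> : X @^-1` `]-oo, (- (s * Num.sqrt c))%R[ =
    measurable_realfun.scale_mfun (-1) X @^-1` `](s * Num.sqrt c)%R, +oo[ by [].
by apply/seteqP; split => w /=; rewrite !in_itv /= andbT mulrN1 ltrNr.
Qed.

End subgaussian_tail.

Definition at_least_in d (T : measurableType d) (R : realType) n
    (Z : 'I_n -> {mfun T >-> R}) (A : set R) (K : nat) : set T :=
  \big[setU/set0]_(J : {set 'I_n} | (K <= #|J|)%N)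
    \bigcap_(j in [set j | j \in J]) (Z j @^-1` A).

Section at_least_in.
Context d (T : measurableType d) (R : realType) (n : nat).
Implicit Types (Z : 'I_n -> {mfun T >-> R}) (A : set R).

Lemma measurable_at_least_in Z A K : measurable A -> measurable (at_least_in Z A K).
Proof.
move=> mA; apply: bigsetU_measurable => J _.
apply: fin_bigcap_measurable; first exact: finite_finset.
by move=> j _; exact: measurable_funPTI.
Qed.

Lemma card_lt_of_not_at_least_in Z A K w (J : {set 'I_n}) :
  ~ at_least_in Z A K w -> (forall j, j \in J -> A (Z j w)) -> (#|J| < K)%N.
Proof.
move=> not_in J_in; rewrite ltnNge; apply/negP => K_le.
by apply: not_in; rewrite /at_least_in (bigD1 J) //=; left => j /J_in.
Qed.

Lemma ordstat_bounds_of_not_at_least_in Z w (V : {set 'I_n}) (p p0 alpha b : R) :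
  0 < p0 -> p0 <= p <= 2^-1 -> 0 < alpha ->
  Num.max (n%:R * alpha) (2 / p0) <= #|V|%:R ->
  let K := natceil (2 / 3 * (p0 * alpha * n%:R)) in
  ~ at_least_in Z `]b, +oo[ K w -> ~ at_least_in Z `]-oo, - b[ K w ->
  let s := [seq Z i w | i <- enum V] in
  [/\ - b <= ordstat s (natceil ((1 - p) * #|V|%:R)),
      ordstat s (natceil ((1 - p) * #|V|%:R)) <= ordstat s (natfloor (p * #|V|%:R)) &
      ordstat s (natfloor (p * #|V|%:R)) <= b].
Proof.
move=> p0_gt0 /andP[p0_le_p p_le] alpha_gt0; rewrite ge_max => /andP[nV_ge V_ge].
move=> K not_hi not_lo s.
have size_s : size s = #|V| by rewrite size_map -cardE.
have p_itv : 0 < p <= 2^-1 by rewrite p_le (lt_le_trans p0_gt0).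
have pV_ge2 : 2 <= p * (size s)%:R.
  have -> : 2 = p0 * (2 / p0) by rewrite mulrC divfK ?lt0r_neq0.
  by rewrite size_s ler_pM // ?divr_ge0 // ltW.
have a_itv : 0 <= p0 * alpha * n%:R <= p * (size s)%:R.
  apply/andP; split; first by rewrite !mulr_ge0 // ltW.
  rewrite size_s -mulrA [alpha * _]mulrC.
  by rewrite ler_pM // ?mulr_ge0 // ltW.
have count_lt (A : set R) (f : pred R) : (forall x, f x -> A x) ->
    ~ at_least_in Z A K w -> (count f s < K)%N.
  move=> fA notA; rewrite count_map_enum.
  by apply: card_lt_of_not_at_least_in notA _ => j; rewrite inE => /andP[_ /fA].
have count_gt : (count (fun x => (b < x)%R) s < K)%N.
  by apply: count_lt not_hi => x; rewrite /= in_itv /= andbT.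
have count_lo : (count (fun x => (x < - b)%R) s < K)%N.
  by apply: count_lt not_lo => x; rewrite /= in_itv.
by have := ordstat_quantile_bounds p_itv pV_ge2 a_itv count_gt count_lo; rewrite size_s.
Qed.

End at_least_in.

Lemma le_measure_bigsetU d (T : measurableType d) (R : realType)
    (mu : {measure set T -> \bar R}) (I : Type) (s : seq I) (a : pred I)
    (F : I -> set T) :
  (forall i, measurable (F i)) ->
  (mu (\big[setU/set0]_(i <- s | a i) F i) <= \sum_(i <- s | a i) mu (F i))%E.
Proof.
move=> mF; elim: s => [|i s IH]; first by rewrite !big_nil measure0.
rewrite !big_cons; case: (a i) => //.
apply: le_trans (measureU2 _ _ _) (leeD _ IH) => //; exact: bigsetU_measurable.
Qed.

Lemma card_set_ord n : #|{set 'I_n}| = (2 ^ n)%N.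
Proof.
rewrite -cardsT (_ : [set: {set 'I_n}]%SET = powerset [set: 'I_n]%SET).
  by rewrite card_powerset cardsT card_ord.
by apply/setP => A; rewrite inE powersetE finset.subsetT.
Qed.

Section independent_tails.
Context d (T : measurableType d) (R : realType) (P : probability T R) (n : nat).
Variables (Z : 'I_n -> {RV P >-> R}) (A : set R) (q : R).
Hypotheses (mA : measurable A) (indep : mutually_independent Z).
Hypothesis tail : forall i, (P (Z i @^-1` A) <= q%:E)%E.

Lemma prob_bigcap_preimage_le (J : {set 'I_n}) :
  (P (\bigcap_(j in [set j | j \in J]) (Z j @^-1` A)) <= (q ^+ #|J|)%:E)%E.
Proof.
have mZA j : measurable (Z j @^-1` A) := measurable_funPTI _ mA.
have finP j : P (Z j @^-1` A) = (fine (P (Z j @^-1` A)))%:E.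
  by rewrite fineK // fin_num_measure.
rewrite (indep J (fun=> mA)); under eq_bigr => j _ do rewrite finP.
rewrite prodEFin lee_fin -prodr_const; apply: ler_prod => j _.
by rewrite -!lee_fin -finP measure_ge0 tail.
Qed.

Lemma prob_at_least_in_le K : 0 <= q <= 1 ->
  (P (at_least_in Z A K) <= (2 ^+ n * q ^+ K)%:E)%E.
Proof.
move=> /andP[q_ge0 q_le1]; rewrite /at_least_in; apply: le_trans (le_measure_bigsetU P _ _ _) _.
  by move=> J; apply: fin_bigcap_measurable => // j _; exact: measurable_funPTI.
apply: le_trans (lee_sum (g := fun _ => (q ^+ K)%:E) _ _) _.
  move=> J K_le; apply: le_trans (prob_bigcap_preimage_le J) _.
  by rewrite lee_fin ler_wiXn2l.
rewrite sumEFin lee_fin; apply: le_trans (_ : _ <= \sum_(J : {set 'I_n}) q ^+ K) _.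
  rewrite [leRHS](bigID (fun J : {set 'I_n} => (K <= #|J|)%N)) /= lerDl.
  by rewrite sumr_ge0 // => J _; rewrite exprn_ge0.
by rewrite sumr_const card_set_ord -[q ^+ K *+ _]mulr_natl natrX.
Qed.

End independent_tails.

Lemma pow2_expR_le (R : realType) (n K : nat) (p0 alpha : R) :
  0 < p0 -> 0 < alpha <= 1 -> 2 / 3 * (p0 * alpha * n%:R) <= K%:R ->
  2 ^+ n * expR (- (4 / p0 * (alpha^-1 + 1) / 2)) ^+ K <= expR (- (3 / 10) * n%:R).
Proof.
move=> p0_gt0 /andP[alpha_gt0 alpha_le1] K_ge; set c := 4 / p0 * (alpha^-1 + 1).
have n_ge0 : 0 <= n%:R :> R by [].
have c_gt0 : 0 < c by rewrite mulr_gt0 ?divr_gt0 // ltr_wpDl // invr_ge0 ltW.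
have Kc_ge : 4 / 3 * n%:R <= K%:R * (c / 2).
  apply: le_trans (ler_wpM2r _ K_ge); last by rewrite divr_ge0 // ltW.
  have -> : 2 / 3 * (p0 * alpha * n%:R) * (c / 2) = 4 / 3 * (1 + alpha) * n%:R.
    by rewrite /c; field; rewrite !lt0r_neq0.
  nra.
have two_le : 2 <= expR (31 / 30) :> R by apply: le_trans (expR_ge1Dx _); lra.
apply: le_trans (_ : _ <= expR (31 / 30) ^+ n * expR (- (c / 2)) ^+ K) _.
  by rewrite ler_wpM2r ?exprn_ge0 ?expR_ge0 // lerXn2r // nnegrE ?expR_ge0.
rewrite -!expRM_natl -expRD ler_expR; lra.
Qed.

Lemma probability_setCU_ge d (T : measurableType d) (R : realType)
    (P : probability T R) (A B : set T) (a b : R) :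
  measurable A -> measurable B -> (P A <= a%:E)%E -> (P B <= b%:E)%E ->
  ((1 - (a + b))%:E <= P (~` (A `|` B)))%E.
Proof.
move=> mA mB PA PB; rewrite probability_setC ?EFinB; last exact: measurableU.
by apply: leeB => //; rewrite EFinD (le_trans (measureU2 _ mA mB)) // leeD.
Qed.

Theorem mainTheorem3 (d : measure_display) (T : measurableType d) (R : realType)
  (P : probability T R) (n : nat) (Z : 'I_n -> {RV P >-> R})
  (sigma alpha p0 : R) :
  0 <= sigma ->
  mutually_independent Z ->
  (forall i, subgaussian P (Z i) (sigma ^+ 2)) ->
  0 < alpha <= 1 ->
  0 < p0 <= 2^-1 ->
  exists E : set T, measurable E /\
    (P E >= (1 - 2 * expR (- (3 / 10) * n%:R))%:E)%E /\
    forall w, E w ->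
    forall (p : R), p0 <= p <= 2^-1 ->
    forall V : {set 'I_n},
      Num.max (n%:R * alpha) (2 / p0) <= #|V|%:R ->
      let s := [seq Z i w | i <- enum V] in
      let B := sigma * Num.sqrt (4 / p0 * (alpha^-1 + 1)) in
      - B <= ordstat s (natceil ((1 - p) * #|V|%:R)) /\
      ordstat s (natceil ((1 - p) * #|V|%:R)) <= ordstat s (natfloor (p * #|V|%:R)) /\
      ordstat s (natfloor (p * #|V|%:R)) <= B.
Proof.
move=> sigma_ge0 indep subg alpha_itv /andP[p0_gt0 p0_le].
have [alpha_gt0 _] := andP alpha_itv.
set c := 4 / p0 * (alpha^-1 + 1); set B := sigma * Num.sqrt c.
have c_gt0 : 0 < c by rewrite mulr_gt0 ?divr_gt0 // ltr_wpDl // invr_ge0 ltW.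
have q_itv : 0 <= expR (- (c / 2)) <= 1.
  by rewrite expR_ge0 expR_le1 oppr_le0 divr_ge0 // ltW.
set K := natceil (2 / 3 * (p0 * alpha * n%:R)).
have a_ge0 : 0 <= 2 / 3 * (p0 * alpha * n%:R) by rewrite !mulr_ge0 // ltW.
have /andP[K_ge _] := natceil_itv a_ge0.
have rare A : measurable A -> (forall i, (P (Z i @^-1` A) <= (expR (- (c / 2)))%:E)%E) ->
    (P (at_least_in Z A K) <= (expR (- (3 / 10) * n%:R))%:E)%E.
  move=> mA tail; apply: le_trans (prob_at_least_in_le mA indep tail K q_itv) _.
  by rewrite lee_fin pow2_expR_le.
exists (~` (at_least_in Z `]B, +oo[ K `|` at_least_in Z `]-oo, - B[ K)).
split; [|split].
- by apply/measurableC/measurableU; apply: measurable_at_least_in.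
- rewrite mulr_natl mulr2n; apply: probability_setCU_ge; try exact: measurable_at_least_in.
  + by apply: rare => // i; apply: subgaussian_tail.
  + by apply: rare => // i; apply: subgaussian_tail_opp.
move=> w /not_orP[not_hi not_lo] p p_itv V V_ge s B'.
by have [] := ordstat_bounds_of_not_at_least_in p0_gt0 p_itv alpha_gt0 V_ge not_hi not_lo.
Qed.
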